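(* If $n\ge 1$ and $k\ge 2$ are integers, then the $k$-Pell graph $\Pi_{n,k}$ is a subgraph of the Fibonacci cube $\Gamma_{(2k-2)n-1}$, i.e. there is an injective map $V(\Pi_{n,k})\to V(\Gamma_{(2k-2)n-1})$ sending adjacent vertices to adjacent vertices.
   Context: For an integer $k\ge 2$, a $k$-Pell string is a finite word over the alphabet $\{0,1,\ldots,k-1,kk\}$, i.e. a word over $\{0,1,\ldots,k\}$ in which every maximal run of the letter $k$ has even length. For $n\ge 0$, the $k$-Pell graph $\Pi_{n,k}$ has as vertices all $k$-Pell strings of length $n$, and two vertices are adjacent if one is obtained from the other either by replacing a single letter $i$ by $i+1$ (or vice versa) for some $i\in\{0,1,\ldots,k-2\}$, or by replacing one factor $(k-1)(k-1)$ by $kk$ (or vice versa), in such a way that the resulting string is again a $k$-Pell string. The Fibonacci cube $\Gamma_m$ is the graph whose vertices are the binary strings of length $m$ with no two consecutive 1s, two vertices being adjacent iff they differ in exactly one coordinate. *)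

From mathcomp Require Import all_boot.
Set Implicit Arguments. Unset Strict Implicit. Unset Printing Implicit Defensive.

(* k-Pell strings: words over {0,...,k-1} U {kk}, i.e. words over {0..k}
   whose maximal runs of the letter k all have even length. *)
Fixpoint pell_word (k : nat) (s : seq nat) : bool :=
  match s with
  | [::] => true
  | a :: t =>
      if a == k then
        (match t with
         | b :: t' => (b == k) && pell_word k t'
         | [::] => false
         end)
      else (a < k) && pell_word k t
  end.

Definition pell_vertex (n k : nat) (s : seq nat) : bool :=
  (size s == n) && pell_word k s.

Definition pell_up (k : nat) (u v : seq nat) : Prop :=
  (size u = size v) /\
  ((exists j, j < size u /\ nth 0 u j <= k - 2 /\ nth 0 v j = (nth 0 u j).+1 /\
       forall i, i != j -> nth 0 u i = nth 0 v i)
   \/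
   (exists j, j.+1 < size u /\ nth 0 u j = k - 1 /\ nth 0 u j.+1 = k - 1 /\
       nth 0 v j = k /\ nth 0 v j.+1 = k /\
       forall i, i != j -> i != j.+1 -> nth 0 u i = nth 0 v i)).

Definition pell_adj (n k : nat) (u v : seq nat) : Prop :=
  pell_vertex n k u /\ pell_vertex n k v /\ (pell_up k u v \/ pell_up k v u).

Definition fib_vertex (m : nat) (s : seq bool) : bool :=
  (size s == m) && [forall i : 'I_m, ~~ (nth false s i && nth false s i.+1)].

Definition fib_adj (m : nat) (x y : seq bool) : Prop :=
  fib_vertex m x /\ fib_vertex m y /\
  #|[pred i : 'I_m | nth false x i != nth false y i]| = 1.

From mathcomp Require Import all_boot.
From mathcomp Require Import zify.
Set Implicit Arguments. Unset Strict Implicit. Unset Printing Implicit Defensive.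

(* Encode a letter a < k by the block 0^(2a) (10)^(k-1-a) of length 2k-2 and
   the letter pair kk by 010 0^(4k-7). Every block is a concatenation of the
   tiles 0 and 10, so every code word is a Fibonacci string ending in 0, and
   dropping that last 0 lands in Gamma_((2k-2)n-1). Raising a letter a to a+1
   turns one tile 10 into 00, and (k-1)(k-1) -> kk turns 0^(4k-4) into
   010 0^(4k-7): each move flips exactly one bit. The second bit of a block
   separates pair blocks from letter blocks, and the number of ones of a letter
   block determines the letter, so the encoding is injective. *)

Lemma eq_take_nth (T : Type) (x0 : T) (u v : seq T) j :
  size u = size v -> (forall i, i < j -> nth x0 u i = nth x0 v i) ->
  take j u = take j v.
Proof.
move=> sz_uv eq_nth; apply: (eq_from_nth (x0 := x0)); rewrite !size_take_min sz_uv //.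
by move=> i; rewrite leq_min => /andP[lt_ij _]; rewrite !nth_take // eq_nth.
Qed.

Lemma eq_drop_nth (T : Type) (x0 : T) (u v : seq T) j :
  size u = size v -> (forall i, j <= i -> nth x0 u i = nth x0 v i) ->
  drop j u = drop j v.
Proof.
move=> sz_uv eq_nth; apply: (eq_from_nth (x0 := x0)); rewrite !size_drop sz_uv //.
by move=> i _; rewrite !nth_drop eq_nth // leq_addr.
Qed.

Lemma rcons_take_last (T : Type) (x0 : T) (s : seq T) m :
  size s = m.+1 -> rcons (take m s) (last x0 s) = s.
Proof.
elim/last_ind: s => // s x _; rewrite size_rcons last_rcons => -[<-].
by rewrite -[rcons s x]cats1 take_size_cat // cats1.
Qed.

Definition hamming (x y : seq bool) : nat := count (fun p => p.1 != p.2) (zip x y).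

Lemma hamming_cons a b x y : hamming (a :: x) (b :: y) = (a != b) + hamming x y.
Proof. by []. Qed.

Lemma hamming_cat x1 x2 y1 y2 : size x1 = size y1 ->
  hamming (x1 ++ x2) (y1 ++ y2) = hamming x1 y1 + hamming x2 y2.
Proof. by move=> sz_xy; rewrite /hamming zip_cat // count_cat. Qed.

Lemma hamming_refl x : hamming x x = 0.
Proof. by elim: x => // a x; rewrite hamming_cons eqxx. Qed.

Lemma hamming_sym x y : hamming x y = hamming y x.
Proof. by elim: x y => [|a x IH] [|b y] //; rewrite !hamming_cons IH eq_sym. Qed.

Lemma card_neq_nth m x y : size x = m -> size y = m ->
  #|[pred i : 'I_m | nth false x i != nth false y i]| = hamming x y.
Proof.
move=> sz_x sz_y; rewrite /hamming -(mkseq_nth (false, false) (zip x y)) /mkseq.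
rewrite size_zip sz_x sz_y minnn -val_enum_ord !count_map cardE /enum_mem size_filter.
by apply: eq_count => i; rewrite /= nth_zip ?sz_x ?sz_y.
Qed.

Definition fib_tiled (s : seq bool) : bool :=
  path (fun x y => ~~ (x && y)) false s && ~~ last false s.

Lemma fib_tiled_cat s1 s2 : fib_tiled s1 -> fib_tiled s2 -> fib_tiled (s1 ++ s2).
Proof. by rewrite /fib_tiled cat_path last_cat => /andP[-> /negbTE->] /andP[-> ->]. Qed.

Lemma fib_tiled_nseq0 m : fib_tiled (nseq m false).
Proof. by elim: m. Qed.

Lemma fib_tiled_flatten ss : all fib_tiled ss -> fib_tiled (flatten ss).
Proof. by elim: ss => //= s ss IH /andP[ts /IH]; apply: fib_tiled_cat. Qed.

Lemma fib_vertex_rcons m x : size x = m -> fib_tiled (rcons x false) -> fib_vertex m x.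
Proof.
move=> sz_x /andP[/path_sorted/(sortedP false) no11 _].
rewrite /fib_vertex sz_x eqxx; apply/forallP => i.
by rewrite -!(nth_rcons_default false x) no11 // size_rcons sz_x ltnS.
Qed.

Section PellEncoding.

Variable k : nat.

Variant pell_word_spec : seq nat -> Prop :=
  | PellNil : pell_word_spec [::]
  | PellDigit a s of a < k & pell_word k s : pell_word_spec (a :: s)
  | PellPair s of pell_word k s : pell_word_spec [:: k, k & s].

Lemma pell_wordP s : pell_word k s -> pell_word_spec s.
Proof.
case: s => [|a s] /=; first by constructor.
case: eqP => [-> | _]; last by case/andP; constructor.
by case: s => // b s /andP[/eqP-> ws]; constructor.
Qed.

Lemma pell_word_ind (P : seq nat -> Prop) :
  P [::] ->
  (forall a s, a < k -> pell_word k s -> P s -> P (a :: s)) ->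
  (forall s, pell_word k s -> P s -> P [:: k, k & s]) ->
  forall s, pell_word k s -> P s.
Proof.
move=> P0 Pdigit Ppair s; have [m] := ubnP (size s).
elim: m s => // m IH s /[swap] /pell_wordP[|a t lt_ak wt|t wt] sz_s //.
- exact: Pdigit lt_ak wt (IH t sz_s wt).
- exact: Ppair wt (IH t (ltnW sz_s) wt).
Qed.

Lemma pell_word_prefix a p q : a != k -> pell_word k (p ++ a :: q) -> pell_word k p.
Proof.
move=> ne_ak; move eq_s: (p ++ a :: q) => s ws.
elim/pell_word_ind: s / ws p eq_s => [|b s lt_bk _ IH|s _ IH] [|c p] //= [->].
- by rewrite ltn_eqF // lt_bk => /IH.
- case: p => [[a_k]|d p [->] /IH->]; last by rewrite eqxx.
  by rewrite a_k eqxx in ne_ak.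
Qed.

Definition digit_block (a : nat) : seq bool :=
  nseq (2 * a) false ++ flatten (nseq (k - 1 - a) [:: true; false]).

Definition pair_block : seq bool := [:: false; true; false] ++ nseq (4 * k - 7) false.

Fixpoint pell_enc (s : seq nat) : seq bool :=
  match s with
  | [::] => [::]
  | a :: t =>
      if a == k then (if t is _ :: t' then pair_block ++ pell_enc t' else [::])
      else digit_block a ++ pell_enc t
  end.

Lemma pell_enc_digit a s : a < k -> pell_enc (a :: s) = digit_block a ++ pell_enc s.
Proof. by move=> lt_ak; rewrite /= ltn_eqF. Qed.

Lemma pell_enc_pair s : pell_enc [:: k, k & s] = pair_block ++ pell_enc s.
Proof. by rewrite /= eqxx. Qed.

Lemma pell_enc_cat p s : pell_word k p -> pell_enc (p ++ s) = pell_enc p ++ pell_enc s.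
Proof.
elim/pell_word_ind: p / => [|a p lt_ak _ IH|p _ IH] //.
- by rewrite !pell_enc_digit // IH catA.
- by rewrite !pell_enc_pair IH catA.
Qed.

Lemma size_digit_block a : a < k -> size (digit_block a) = 2 * k - 2.
Proof.
by move=> lt_ak; rewrite size_cat size_nseq size_flatten /shape map_nseq sumn_nseq /=; lia.
Qed.

Lemma count_digit_block a : count id (digit_block a) = k - 1 - a.
Proof. by rewrite count_cat count_nseq count_flatten map_nseq sumn_nseq mul1n. Qed.

Lemma digit_block_inj a b : a < k -> b < k -> digit_block a = digit_block b -> a = b.
Proof. by move=> lt_ak lt_bk /(congr1 (count id)); rewrite !count_digit_block; lia. Qed.

Lemma fib_tiled_digit_block a : fib_tiled (digit_block a).
Proof.
by apply: fib_tiled_cat (fib_tiled_nseq0 _) (fib_tiled_flatten _); rewrite all_nseq orbT.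
Qed.

Lemma fib_tiled_pair_block : fib_tiled pair_block.
Proof. exact: fib_tiled_cat (fib_tiled_nseq0 _). Qed.

Lemma fib_tiled_pell_enc s : pell_word k s -> fib_tiled (pell_enc s).
Proof.
elim/pell_word_ind: s / => [|a s lt_ak _ IH|s _ IH] //.
- by rewrite pell_enc_digit // fib_tiled_cat ?fib_tiled_digit_block.
- by rewrite pell_enc_pair fib_tiled_cat ?fib_tiled_pair_block.
Qed.

Lemma hamming_digit_block a : a.+1 < k -> hamming (digit_block a) (digit_block a.+1) = 1.
Proof.
move=> lt_ak; rewrite /digit_block mulnSr nseqD -catA.
have -> : k - 1 - a = (k - 1 - a.+1).+1 by lia.
by rewrite hamming_cat // hamming_refl !hamming_cons hamming_refl.
Qed.

Lemma pell_up_cat u v : pell_up k u v -> exists p q,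
  (exists2 a, a <= k - 2 & u = p ++ a :: q /\ v = p ++ a.+1 :: q)
  \/ (u = p ++ [:: k - 1, k - 1 & q] /\ v = p ++ [:: k, k & q]).
Proof.
have split1 (s : seq nat) i : i < size s -> s = take i s ++ nth 0 s i :: drop i.+1 s.
  by move=> lt_is; rewrite -drop_nth ?cat_take_drop.
have split2 (s : seq nat) i : i.+1 < size s ->
    s = take i s ++ [:: nth 0 s i, nth 0 s i.+1 & drop i.+2 s].
  by move=> lt_is; rewrite -drop_nth //; apply/split1/ltnW.
case=> sz_uv [[j [lt_j [le_a [Ev eq_out]]]] | [j [lt_j1 [Eu1 [Eu2 [Ev1 [Ev2 eq_out]]]]]]].
- have eq_take : take j v = take j u.
    by apply: (eq_take_nth (x0 := 0)) => // i lt_ij; rewrite -eq_out // ltn_eqF.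
  have eq_drop : drop j.+1 v = drop j.+1 u.
    by apply: (eq_drop_nth (x0 := 0)) => // i lt_ji; rewrite -eq_out // gtn_eqF.
  exists (take j u), (drop j.+1 u); left; exists (nth 0 u j) => //.
  split; first exact: split1.
  by rewrite -Ev -eq_take -eq_drop -split1 // -sz_uv.
- have eq_take : take j v = take j u.
    by apply: (eq_take_nth (x0 := 0)) => // i lt_ij; rewrite -eq_out // ltn_eqF // ltnW.
  have eq_drop : drop j.+2 v = drop j.+2 u.
    by apply: (eq_drop_nth (x0 := 0)) => // i lt_ji; rewrite -eq_out // gtn_eqF // ltnW.
  exists (take j u), (drop j.+2 u); right.
  split; first by rewrite {1}(split2 u j) // Eu1 Eu2.
  by rewrite {1}(split2 v j) -?sz_uv // Ev1 Ev2 eq_take eq_drop.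
Qed.

Hypothesis k_gt1 : 1 < k.

Lemma size_pair_block : size pair_block = (2 * k - 2) + (2 * k - 2).
Proof. by rewrite size_cat size_nseq /=; lia. Qed.

Lemma hamming_pair_block : hamming (digit_block (k - 1) ++ digit_block (k - 1)) pair_block = 1.
Proof.
rewrite /digit_block subnn cats0 -nseqD.
have -> : 2 * (k - 1) + 2 * (k - 1) = 3 + (4 * k - 7) by lia.
by rewrite nseqD hamming_cat // hamming_refl.
Qed.

Lemma nth_digit_block1 a s : nth false (digit_block a ++ s) 1 = false.
Proof.
case: a => [|a]; last by rewrite /digit_block mul2n doubleS.
by rewrite /digit_block subn0; case: k k_gt1 => [|[|j]].
Qed.

Lemma size_pell_enc s : pell_word k s -> size (pell_enc s) = (2 * k - 2) * size s.
Proof.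
elim/pell_word_ind: s / => [|a s lt_ak _ IH|s _ IH]; first by rewrite muln0.
- by rewrite pell_enc_digit // size_cat size_digit_block // IH mulnS.
- by rewrite pell_enc_pair size_cat size_pair_block IH !mulnS addnA.
Qed.

Lemma pell_enc_inj u v : pell_word k u -> pell_word k v -> pell_enc u = pell_enc v -> u = v.
Proof.
move=> wu wv eq_enc; have : size u = size v.
  apply/eqP; rewrite -(@eqn_pmul2l (2 * k - 2)); last by lia.
  by rewrite -!size_pell_enc // eq_enc.
elim/pell_word_ind: u / wu v wv eq_enc => [|a u lt_ak _ IH|u _ IH] ?
  /pell_wordP[|b v lt_bk wv|v wv] //.
2,3: by rewrite pell_enc_pair pell_enc_digit // => /(congr1 (nth false ^~ 1));
       rewrite nth_digit_block1.
- move=> + [eq_sz]; rewrite !pell_enc_digit // => /eqP.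
  by rewrite eqseq_cat ?size_digit_block // => /andP[/eqP/digit_block_inj-> // /eqP/IH->].
- move=> + [eq_sz]; rewrite !pell_enc_pair => /(congr1 (drop (size pair_block))).
  by rewrite !drop_size_cat // => /IH->.
Qed.

Lemma hamming_pell_enc_up u v :
  pell_word k u -> pell_up k u v -> hamming (pell_enc u) (pell_enc v) = 1.
Proof.
move=> wu /pell_up_cat[p [q [[a le_a [Eu ->]] | [Eu ->]]]]; subst u.
- have lt_ak : a.+1 < k by lia.
  have wp : pell_word k p by apply: (pell_word_prefix _ wu); lia.
  rewrite !pell_enc_cat // (pell_enc_digit _ (ltnW lt_ak)) (pell_enc_digit _ lt_ak).
  rewrite hamming_cat // hamming_refl hamming_cat ?size_digit_block ?(ltnW lt_ak) //.
  by rewrite hamming_digit_block // hamming_refl.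
- have lt_k1k : k - 1 < k by lia.
  have wp : pell_word k p by apply: (pell_word_prefix _ wu); lia.
  rewrite !pell_enc_cat // !(pell_enc_digit _ lt_k1k) pell_enc_pair.
  rewrite hamming_cat // hamming_refl catA hamming_cat; last first.
    by rewrite size_cat size_pair_block size_digit_block.
  by rewrite hamming_pair_block hamming_refl.
Qed.

Definition pell_code (s : seq nat) : seq bool := take (size (pell_enc s)).-1 (pell_enc s).

Lemma pell_enc_rcons n u : 0 < n -> pell_vertex n k u -> pell_enc u = rcons (pell_code u) false.
Proof.
move=> n_gt0 /andP[/eqP sz_u wu]; have /andP[_ /negbTE <-] := fib_tiled_pell_enc wu.
by rewrite rcons_take_last // prednK // size_pell_enc // sz_u muln_gt0 n_gt0 andbT; lia.
Qed.

Lemma size_pell_code n u : pell_vertex n k u -> size (pell_code u) = (2 * k - 2) * n - 1.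
Proof.
by case/andP=> /eqP sz_u wu; rewrite size_takel ?leq_pred // size_pell_enc // sz_u subn1.
Qed.

Lemma fib_vertex_pell_code n u :
  0 < n -> pell_vertex n k u -> fib_vertex ((2 * k - 2) * n - 1) (pell_code u).
Proof.
move=> n_gt0 vu; apply: fib_vertex_rcons (size_pell_code vu) _.
by rewrite -(pell_enc_rcons n_gt0 vu) fib_tiled_pell_enc //; case/andP: vu.
Qed.

Lemma pell_code_inj n : 0 < n -> {in pell_vertex n k &, injective pell_code}.
Proof.
move=> n_gt0 u v vu vv eq_code; apply: pell_enc_inj; [by case/andP: vu | by case/andP: vv |].
by rewrite (pell_enc_rcons n_gt0 vu) (pell_enc_rcons n_gt0 vv) eq_code.
Qed.

Lemma fib_adj_pell_code n u v : 0 < n -> pell_adj n k u v ->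
  fib_adj ((2 * k - 2) * n - 1) (pell_code u) (pell_code v).
Proof.
move=> n_gt0 [vu [vv up_uv]]; split; first exact: fib_vertex_pell_code.
split; first exact: fib_vertex_pell_code.
rewrite card_neq_nth ?(size_pell_code vu) ?(size_pell_code vv) //.
have : hamming (pell_enc u) (pell_enc v) = 1.
  case: up_uv => up; [|rewrite hamming_sym]; apply: hamming_pell_enc_up up.
    by case/andP: vu.
  by case/andP: vv.
rewrite (pell_enc_rcons n_gt0 vu) (pell_enc_rcons n_gt0 vv) -!cats1.
by rewrite hamming_cat ?(size_pell_code vu) ?(size_pell_code vv) // hamming_refl addn0.
Qed.

End PellEncoding.

Theorem proposition5p8 (n k : nat) : 1 <= n -> 2 <= k ->
  exists f : seq nat -> seq bool,
    [/\ (forall u, pell_vertex n k u -> fib_vertex ((2 * k - 2) * n - 1) (f u)),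
        {in pell_vertex n k &, injective f}
      & (forall u v, pell_adj n k u v -> fib_adj ((2 * k - 2) * n - 1) (f u) (f v))].
Proof.
move=> n_gt0 k_gt1; exists (pell_code k); split.
- by move=> u; apply: fib_vertex_pell_code.
- exact: pell_code_inj.
- by move=> u v; apply: fib_adj_pell_code.
Qed.
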